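(* Let $v \ge 81$ be an integer. Then \[ \beta(2,v,4) \le \left\lfloor \frac{2v-3}{3} \right\rfloor, \] and \[ \beta(2,v,4) \ge \begin{cases} \frac{2v-6}{3} & \text{if } v \equiv 0 \pmod 3,\\ \frac{2v-8}{3} & \text{if } v \equiv 1 \pmod 3,\\ \frac{2v-4}{3} & \text{if } v \equiv 2 \pmod 3. \end{cases} \]
   Context: For integers $v \ge k \ge 2$, a $(v,k)$-packing is a pair $(X,\mathcal{B})$ where $X$ is a set of $v$ points and $\mathcal{B}$ is a set of $k$-subsets of $X$ (blocks) such that every pair of distinct points lies in at most one block. A partial parallel class (PPC) is a set of pairwise disjoint blocks; its size is the number of blocks. A PPC of size $\rho$ is maximum if the packing has no PPC of size $\rho+1$. $\beta(\rho,v,k)$ denotes the maximum number of blocks in a $(v,k)$-packing in which the maximum PPC has size $\rho$. *)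

From mathcomp Require Import all_boot.
Set Implicit Arguments. Unset Strict Implicit. Unset Printing Implicit Defensive.

Definition is_packing (v k : nat) (F : {set {set 'I_v}}) : bool :=
  [forall B in F, #|B| == k] &&
  [forall x : 'I_v, forall y : 'I_v,
     (x != y) ==> (#|[set B in F | (x \in B) && (y \in B)]| <= 1)].

Definition is_ppc (v : nat) (F P : {set {set 'I_v}}) : bool :=
  (P \subset F) &&
  [forall B1 in P, forall B2 in P, (B1 != B2) ==> [disjoint B1 & B2]].

Definition has_ppc_of_size (v : nat) (F : {set {set 'I_v}}) (r : nat) : bool :=
  [exists P : {set {set 'I_v}}, is_ppc F P && (#|P| == r)].

Definition max_ppc_size (v : nat) (F : {set {set 'I_v}}) (rho : nat) : bool :=
  has_ppc_of_size F rho && ~~ has_ppc_of_size F rho.+1.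

(* beta(rho,v,k): maximum number of blocks of a (v,k)-packing whose maximum
   PPC has size rho (0 if there is no such packing). *)
Definition beta (rho v k : nat) : nat :=
  \max_(F : {set {set 'I_v}} | is_packing k F && max_ppc_size F rho) #|F|.

From mathcomp Require Import all_boot.
From mathcomp Require Import zify.
Set Implicit Arguments. Unset Strict Implicit. Unset Printing Implicit Defensive.

(* Two blocks share at most one point, so a point lies in at most
   (v-1)/3 blocks, and pairwise meeting blocks either share a common point or
   number at most 4 * 4 (without a common point each point lies in at most 4 of
   them, and all of them meet a fixed one).  Suppose no three blocks are
   pairwise disjoint.  If a point p lies in at least 9 blocks, two disjoint
   blocks avoiding p would cover only 8 points, yet every block through p meets
   their union in its own point; hence the blocks avoiding p pairwise meet, so
   they are few or all pass through a second point q, and then |F| is at most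
   deg p + deg q <= (2v-4)/3.  If every degree is at most 8, at most 32 blocks
   meet a fixed block and at most 16 avoid it.  For 3m+2 <= v and m >= 4, the blocks {0, 3i+2, 3i+3, 3i+4} and
   {1, i+2, i+m+2, i+2m+2}, i < m, form a packing in which every block contains
   0 or 1, so partial parallel classes have at most two blocks, and
   {0,2,3,4}, {1,5,m+5,2m+5} is one of size two. *)

Definition star (T : finType) (S : {set {set T}}) (x : T) := [set B in S | x \in B].

Lemma cards_sep (T : finType) (A : {set T}) (P : pred T) :
  #|A| = #|[set x in A | P x]| + #|[set x in A | ~~ P x]|.
Proof.
rewrite -(cardsID [set x | P x] A); congr addn; apply: eq_card => x;
  by rewrite !inE andbC.
Qed.

Lemma card_setI_gt0 (T : finType) (A B : {set T}) :
  (0 < #|A :&: B|) = ~~ [disjoint A & B].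
Proof. by rewrite lt0n cards_eq0 setI_eq0. Qed.

Lemma cards_sepE (T : finType) (A : {set T}) (P : pred T) :
  #|[set x in A | P x]| = \sum_(x in A) P x.
Proof.
rewrite -sum1_card big_mkcond [RHS]big_mkcond; apply: eq_bigr => x _.
by rewrite inE; case: (x \in A); case: (P x).
Qed.

Lemma sum_card_setI_star (T : finType) (S : {set {set T}}) (D : {set T}) :
  \sum_(B in S) #|B :&: D| = \sum_(x in D) #|star S x|.
Proof.
have setIE B : B :&: D = [set x in D | x \in B].
  by apply/setP => x; rewrite !inE andbC.
under eq_bigr do rewrite setIE cards_sepE.
by rewrite exchange_big; apply: eq_bigr => x _; rewrite cards_sepE.
Qed.

Lemma card_meeting_le_sum_star (T : finType) (S : {set {set T}}) (D : {set T}) :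
  {in S, forall B : {set T}, ~~ [disjoint B & D]} -> #|S| <= \sum_(x in D) #|star S x|.
Proof.
move=> meets; rewrite -sum_card_setI_star -sum1_card.
by apply: leq_sum => B /meets; rewrite card_setI_gt0.
Qed.

Section LinearUniformFamily.

Variables (T : finType) (k : nat) (F : {set {set T}}).
Hypothesis card_block : {in F, forall B : {set T}, #|B| = k}.
Hypothesis pair_le1 : forall x y : T, x != y ->
  #|[set B in F | (x \in B) && (y \in B)]| <= 1.

Lemma sum_card_setI_le (S : {set {set T}}) (p : T) (D : {set T}) :
  S \subset star F p -> p \notin D -> \sum_(B in S) #|B :&: D| <= #|D|.
Proof.
move=> SFp pD; rewrite sum_card_setI_star -sum1_card; apply: leq_sum => x xD.
have px : p != x by apply: contraNneq pD => ->.
apply: leq_trans (pair_le1 px); apply: subset_leq_card; apply/subsetP => B.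
by rewrite !inE => /andP[/(subsetP SFp)]; rewrite inE => /andP[-> ->] ->.
Qed.

Lemma card_star_meeting_le (S : {set {set T}}) (p : T) (D : {set T}) :
  S \subset star F p -> p \notin D ->
  {in S, forall B : {set T}, ~~ [disjoint B & D]} -> #|S| <= #|D|.
Proof.
move=> SFp pD meets; apply: leq_trans (sum_card_setI_le SFp pD).
by rewrite -sum1_card; apply: leq_sum => B /meets; rewrite card_setI_gt0.
Qed.

Lemma card_star_covered_le (p : T) (D : {set T}) :
  p \notin D -> {in star F p, forall B : {set T}, B :\ p \subset D} ->
  (k - 1) * #|star F p| <= #|D|.
Proof.
move=> pD cover; have := sum_card_setI_le (subxx _) pD.
rewrite mulnC -sum_nat_const; congr (_ <= _); apply: eq_bigr => B Bp.
have [BF pB] : B \in F /\ p \in B by move: Bp; rewrite inE => /andP[].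
have -> : B :&: D = B :\ p.
  apply/setP => y; rewrite !inE; case: (eqVneq y p) => [->|yp] /=.
    by rewrite (negbTE pD) andbF.
  by case yB: (y \in B); rewrite // (subsetP (cover B Bp)) // !inE yp yB.
by have := cardsD1 p B; rewrite pB card_block //; lia.
Qed.

Lemma intersecting_common_point_or_small (G : {set {set T}}) :
  G \subset F -> {in G &, forall B C : {set T}, ~~ [disjoint B & C]} ->
  (exists q, {in G, forall B : {set T}, q \in B}) \/ #|G| <= k * k.
Proof.
move=> GF meet.
have [/existsP[q /forall_inP Gq]|/existsPn no_common] :=
  boolP [exists q, [forall B in G, q \in B]]; first by left; exists q.
right; have star_le q : #|star G q| <= k.
  have /forall_inPn[D DG qD] := no_common q.
  rewrite -(card_block (subsetP GF D DG)); apply: (card_star_meeting_le (p := q)) => //.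
    by apply/subsetP => B; rewrite !inE => /andP[/(subsetP GF) -> ->].
  by move=> B; rewrite inE => /andP[BG _]; apply: meet.
have [->|[C CG]] := set_0Vmem G; first by rewrite cards0.
apply: leq_trans (card_meeting_le_sum_star (fun B BG => meet B C BG CG)) _.
rewrite -{1}(card_block (subsetP GF C CG)) -sum_nat_const.
by apply: leq_sum => x _; apply: star_le.
Qed.

Lemma star_card_le (p : T) : (k - 1) * #|star F p| <= #|T| - 1.
Proof.
rewrite [#|T| - 1]subn1 -(cardsC1 p); apply: card_star_covered_le; first by rewrite !inE eqxx.
by move=> B _; apply/subsetP => y; rewrite !inE => /andP[].
Qed.

Lemma star_card_le_avoiding (p q : T) :
  p != q -> {in star F p, forall B : {set T}, q \notin B} ->
  (k - 1) * #|star F p| <= #|T| - 2.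
Proof.
move=> pq avoid_q; have := cardsC [set p; q]; rewrite cards2 pq => cardC.
have -> : #|T| - 2 = #|~: [set p; q]| by lia.
apply: card_star_covered_le => [|B Bp]; first by rewrite !inE eqxx.
apply/subsetP => y; rewrite !inE negb_or => /andP[-> yB] /=.
by apply: contraNneq (avoid_q B Bp) => <-.
Qed.

Lemma card_avoiding_in_star (p q : T) : 2 < k -> p != q ->
  [set B in F | p \notin B] \subset star F q -> (k - 1) * #|F| <= 2 * #|T| - 4.
Proof.
move=> k_gt2 pq avoid_in_q.
have cardF := cards_sep F (fun B => p \in B); rewrite -/(star F p) in cardF.
have /subset_leq_card := avoid_in_q; rewrite leq_eqVlt => /orP[/eqP avoidE|avoid_lt].
  have {}avoidE : [set B in F | p \notin B] = star F q.
    exact/setP/subset_cardP.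
  have q_avoids_p : {in star F q, forall B : {set T}, p \notin B}.
    by move=> B; rewrite -avoidE inE => /andP[].
  have p_avoids_q : {in star F p, forall B : {set T}, q \notin B}.
    move=> B; rewrite inE => /andP[BF pB]; apply/negP => qB.
    by have := q_avoids_p B; rewrite !inE BF qB pB => /(_ isT).
  have qp : q != p by rewrite eq_sym.
  have := star_card_le_avoiding pq p_avoids_q.
  have := star_card_le_avoiding qp q_avoids_p.
  rewrite avoidE in cardF; nia.
have := star_card_le p; have := star_card_le q; nia.
Qed.

End LinearUniformFamily.

Section NoThreeDisjointBlocks.

Variables (T : finType) (F : {set {set T}}).
Hypothesis card_block : {in F, forall B : {set T}, #|B| = 4}.
Hypothesis pair_le1 : forall x y : T, x != y ->
  #|[set B in F | (x \in B) && (y \in B)]| <= 1.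
Hypothesis no_three_disjoint : forall B1 B2 B3 : {set T},
  B1 \in F -> B2 \in F -> B3 \in F ->
  [disjoint B1 & B2] -> [disjoint B1 & B3] -> [disjoint B2 & B3] -> False.

Lemma avoiding_blocks_meet (p : T) : 8 < #|star F p| ->
  {in [set B in F | p \notin B] &, forall B C : {set T}, ~~ [disjoint B & C]}.
Proof.
move=> deg_gt8 B C; rewrite !inE => /andP[BF pB] /andP[CF pC]; apply/negP => dBC.
suff : #|star F p| <= #|B :|: C|.
  by have := (leq_card_setU B C).1; rewrite (card_block BF) (card_block CF); lia.
apply: (card_star_meeting_le pair_le1 (subxx _)); first by rewrite !inE negb_or pB pC.
move=> A; rewrite inE => /andP[AF _]; apply/negP => dA.
by apply: (no_three_disjoint AF BF CF _ _ dBC); apply: disjointWr dA;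
  rewrite ?subsetUl ?subsetUr.
Qed.

Lemma card_high_degree (p : T) : 81 <= #|T| -> 8 < #|star F p| ->
  #|F| <= (2 * #|T| - 3) %/ 3.
Proof.
move=> T_ge81 deg_gt8; have dp := star_card_le card_block pair_le1 p.
have cardF := cards_sep F (fun B => p \in B); rewrite -/(star F p) in cardF.
have avoidF : [set B in F | p \notin B] \subset F.
  by apply/subsetP => B; rewrite inE => /andP[].
have [[q avoid_q]|small] := intersecting_common_point_or_small card_block
  pair_le1 avoidF (avoiding_blocks_meet deg_gt8); last by lia.
have avoid_in_q : [set B in F | p \notin B] \subset star F q.
  by apply/subsetP => B BFp; rewrite inE (subsetP avoidF B BFp) avoid_q.
have [qp|qp] := eqVneq q p.
  have avoid0 : [set B in F | p \notin B] = set0.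
    apply/eqP; rewrite -subset0; apply/subsetP => B BFp.
    by have := avoid_q B BFp; move: BFp; rewrite qp inE => /andP[_ /negbTE ->].
  by move: cardF; rewrite avoid0 cards0; lia.
have pq : p != q by rewrite eq_sym.
by have := card_avoiding_in_star card_block pair_le1 (isT : 2 < 4) pq avoid_in_q; lia.
Qed.

Lemma card_low_degree : (forall p : T, #|star F p| <= 8) -> #|F| <= 48.
Proof.
move=> deg_le8; have [->|[B BF]] := set_0Vmem F; first by rewrite cards0.
rewrite (cards_sep F (fun C => [disjoint C & B])).
set disj := [set C in F | [disjoint C & B]]; set meet := [set C in F | ~~ _].
have disjF : disj \subset F by apply/subsetP => C; rewrite inE => /andP[].
have meetF : meet \subset F by apply/subsetP => C; rewrite inE => /andP[].
have card_meet : #|meet| <= 32.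
  have meets : {in meet, forall C : {set T}, ~~ [disjoint C & B]}.
    by move=> C; rewrite inE => /andP[].
  apply: leq_trans (card_meeting_le_sum_star meets) _.
  apply: (@leq_trans (\sum_(x in B) 8)); last by rewrite sum_nat_const card_block.
  apply: leq_sum => x _; apply: leq_trans (deg_le8 x); apply: subset_leq_card.
  by apply/subsetP => C; rewrite !inE => /andP[/andP[-> _] ->].
have disj_meet : {in disj &, forall C1 C2 : {set T}, ~~ [disjoint C1 & C2]}.
  move=> C1 C2; rewrite !inE => /andP[C1F dC1] /andP[C2F dC2]; apply/negP => d12.
  by apply: (no_three_disjoint C1F C2F BF).
have card_disj : #|disj| <= 16.
  have [[q disj_q]|//] := intersecting_common_point_or_small card_block pair_le1
    disjF disj_meet.
  apply: (@leq_trans 8) => //; apply: leq_trans (deg_le8 q).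
  apply: subset_leq_card; apply/subsetP => C Cdisj.
  by rewrite inE (subsetP disjF C Cdisj) disj_q.
lia.
Qed.

Lemma card_no_three_disjoint : 81 <= #|T| -> #|F| <= (2 * #|T| - 3) %/ 3.
Proof.
move=> T_ge81; have [/existsP[p deg_gt8]|/existsPn no_deg_gt8] :=
  boolP [exists p, 8 < #|star F p|]; first exact: card_high_degree deg_gt8.
have deg_le8 p : #|star F p| <= 8 by rewrite leqNgt no_deg_gt8.
by have := card_low_degree deg_le8; lia.
Qed.

End NoThreeDisjointBlocks.

Section PackingsAndParallelClasses.

Variable v : nat.
Implicit Types (F P : {set {set 'I_v}}) (B : {set 'I_v}).

Lemma packingP k F :
  reflect ({in F, forall B, #|B| = k} /\ forall x y : 'I_v, x != y ->
             #|[set B in F | (x \in B) && (y \in B)]| <= 1)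
          (is_packing k F).
Proof.
apply: (iffP andP) => [[/forall_inP card_k /forallP pair_le1]|[card_k pair_le1]].
  split=> [B /card_k /eqP //|x y xy].
  by have /forallP/(_ y)/implyP := pair_le1 x; apply.
split; first by apply/forall_inP => B /card_k ->.
by apply/forallP => x; apply/forallP => y; apply/implyP; apply: pair_le1.
Qed.

Lemma ppcP F P :
  reflect (P \subset F /\ {in P &, forall B1 B2, B1 != B2 -> [disjoint B1 & B2]})
          (is_ppc F P).
Proof.
apply: (iffP andP) => [[PF /forall_inP disj]|[PF disj]]; split=> //.
  by move=> B1 B2 /disj /forall_inP h /h /implyP.
by apply/forall_inP => B1 B1P; apply/forall_inP => B2 B2P; apply/implyP; apply: disj.
Qed.

Lemma ppc_star_le1 F P x : is_ppc F P -> #|star P x| <= 1.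
Proof.
case/ppcP=> _ disj; apply/card_le1_eqP => B1 B2.
rewrite !inE => /andP[B1P xB1] /andP[B2P xB2]; apply/eqP; apply: contraTT xB2 => ne.
by rewrite (disjointFl (disj _ _ B2P B1P ne) xB1).
Qed.

Lemma ppc_card_le2 F P (a b : 'I_v) :
  {in F, forall B, (a \in B) || (b \in B)} -> is_ppc F P -> #|P| <= 2.
Proof.
move=> cover P_ppc; rewrite (cards_sep P (fun B => a \in B)) -/(star P a).
have /ppcP[PF _] := P_ppc.
have : [set B in P | a \notin B] \subset star P b.
  apply/subsetP => B; rewrite !inE => /andP[BP aB]; rewrite BP.
  by have := cover B (subsetP PF B BP); rewrite (negbTE aB).
move/subset_leq_card; have := ppc_star_le1 a P_ppc; have := ppc_star_le1 b P_ppc.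
lia.
Qed.

Lemma max_ppc2_of_cover F B1 B2 (a b : 'I_v) :
  B1 \in F -> B2 \in F -> B1 != B2 -> [disjoint B1 & B2] ->
  {in F, forall B, (a \in B) || (b \in B)} -> max_ppc_size F 2.
Proof.
move=> B1F B2F ne12 dis12 cover; apply/andP; split.
  apply/existsP; exists [set B1; B2]; rewrite cards2 ne12 andbT.
  apply/ppcP; split.
    by apply/subsetP => B; rewrite !inE => /orP[] /eqP ->.
  move=> C1 C2; rewrite !inE => /orP[] /eqP -> /orP[] /eqP ->;
    by rewrite ?eqxx // disjoint_sym.
apply/negP => /existsP[P /andP[/(ppc_card_le2 cover) le2 /eqP card3]].
by rewrite card3 in le2.
Qed.

Lemma ppc3_of_disjoint F B1 B2 B3 :
  set0 \notin F -> B1 \in F -> B2 \in F -> B3 \in F ->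
  [disjoint B1 & B2] -> [disjoint B1 & B3] -> [disjoint B2 & B3] ->
  has_ppc_of_size F 3.
Proof.
move=> F_nonempty B1F B2F B3F d12 d13 d23.
have neq_of_disj (B C : {set 'I_v}) : B \in F -> [disjoint B & C] -> B != C.
  move=> BF; apply: contraTneq => <-; rewrite -setI_eq0 setIid.
  by apply: contraNneq F_nonempty => <-.
apply/existsP; exists [set B1; B2; B3]; apply/andP; split.
  apply/ppcP; split.
    by apply/subsetP => B; rewrite !inE => /orP[/orP[]|] /eqP ->.
  move=> C1 C2; rewrite !inE => /orP[/orP[]|] /eqP -> /orP[/orP[]|] /eqP ->;
    by rewrite ?eqxx // disjoint_sym.
have -> : [set B1; B2; B3] = B1 |: [set B2; B3].
  by apply/setP => B; rewrite !inE orbA.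
rewrite cardsU1 cards2 !inE negb_or.
by rewrite (neq_of_disj _ _ B1F d12) (neq_of_disj _ _ B1F d13) (neq_of_disj _ _ B2F d23).
Qed.

Lemma leq_card_beta rho k F :
  is_packing k F -> max_ppc_size F rho -> #|F| <= beta rho v k.
Proof.
by move=> packF maxF; apply: leq_bigmax_cond; rewrite packF maxF.
Qed.

End PackingsAndParallelClasses.

Definition nat_set (v : nat) (s : seq nat) : {set 'I_v} := [set p : 'I_v | nat_of_ord p \in s].

Lemma card_nat_set (v : nat) (s : seq nat) :
  uniq s -> all (fun k => k < v) s -> #|nat_set v s| = size s.
Proof.
move=> s_uniq s_lt; transitivity (size (pmap insub s : seq 'I_v)).
  rewrite -(card_uniqP (pmap_sub_uniq 'I_v s_uniq)).
  by apply: eq_card => p; rewrite inE mem_pmap_sub.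
by rewrite size_pmap_sub; apply/eqP; rewrite -all_count.
Qed.

Section Construction.

Variables n m : nat.
Local Notation v := n.+1.
Hypothesis m_gt3 : 3 < m.
Hypothesis m_fits : 3 * m + 2 <= v.

Definition Xblock (i : nat) := nat_set v [:: 0; 3 * i + 2; 3 * i + 3; 3 * i + 4].
Definition Yblock (i : nat) := nat_set v [:: 1; i + 2; i + m + 2; i + 2 * m + 2].
Definition XYpacking := [set Xblock i | i : 'I_m] :|: [set Yblock i | i : 'I_m].

Lemma mem_nat_set_inord (s : seq nat) (k : nat) :
  k <= n -> (inord k \in nat_set v s) = (k \in s).
Proof. by move=> k_le; rewrite inE /= inordK. Qed.

Lemma card_Xblock (i : 'I_m) : #|Xblock i| = 4.
Proof. by have i_lt := ltn_ord i; rewrite card_nat_set //= ?inE; lia. Qed.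

Lemma card_Yblock (i : 'I_m) : #|Yblock i| = 4.
Proof. by have i_lt := ltn_ord i; rewrite card_nat_set //= ?inE; lia. Qed.

Lemma mem_XYpacking B : B \in XYpacking ->
  (exists i : 'I_m, B = Xblock i) \/ (exists i : 'I_m, B = Yblock i).
Proof. by rewrite inE => /orP[] /imsetP[i _ ->]; [left|right]; exists i. Qed.

Lemma Xblock_in (i : 'I_m) : Xblock i \in XYpacking.
Proof. by rewrite inE imset_f. Qed.

Lemma Yblock_in (i : 'I_m) : Yblock i \in XYpacking.
Proof. by rewrite inE imset_f ?orbT. Qed.

Lemma XYpacking_pair_le1 (x y : 'I_v) : x != y ->
  #|[set B in XYpacking | (x \in B) && (y \in B)]| <= 1.
Proof.
move=> xy; have {}xy : (x : nat) != y by [].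
apply/card_le1_eqP => B1 B2.
move=> /setIdP[/mem_XYpacking[][i ->] /andP[xB1 yB1]];
move=> /setIdP[/mem_XYpacking[][j ->] /andP[xB2 yB2]];
have i_lt := ltn_ord i; have j_lt := ltn_ord j; move: xB1 yB1 xB2 yB2;
rewrite !inE => x1 y1 x2 y2;
  first [congr Xblock; lia | congr Yblock; lia | exfalso; lia].
Qed.

Lemma Xblock_inord0 (i : 'I_m) : inord 0 \in Xblock i.
Proof. by rewrite mem_nat_set_inord // inE eqxx. Qed.

Lemma Yblock_inord1 (i : 'I_m) : inord 1 \in Yblock i.
Proof. by rewrite mem_nat_set_inord ?inE ?eqxx //; lia. Qed.

Lemma Yblock_notin_inord0 (i : 'I_m) : inord 0 \notin Yblock i.
Proof. by rewrite mem_nat_set_inord // !inE; lia. Qed.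

Lemma card_XYpacking : #|XYpacking| = 2 * m.
Proof.
have XY0 : [set Xblock i | i : 'I_m] :&: [set Yblock i | i : 'I_m] = set0.
  apply/setP => B; rewrite !inE; apply/negP => /andP[/imsetP[i _ ->] /imsetP[j _ XY]].
  by have := Xblock_inord0 i; rewrite XY (negbTE (Yblock_notin_inord0 j)).
rewrite cardsU XY0 cards0 subn0 !card_imset ?card_ord; first lia.
- move=> i j XYij; apply: ord_inj; have i_lt := ltn_ord i; have j_lt := ltn_ord j.
  have : inord (i + 2) \in Yblock j.
    by rewrite -XYij mem_nat_set_inord ?inE ?eqxx ?orbT //; lia.
  by rewrite mem_nat_set_inord ?inE; lia.
- move=> i j XYij; apply: ord_inj; have i_lt := ltn_ord i; have j_lt := ltn_ord j.
  have : inord (3 * i + 2) \in Xblock j.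
    by rewrite -XYij mem_nat_set_inord ?inE ?eqxx ?orbT //; lia.
  by rewrite mem_nat_set_inord ?inE; lia.
Qed.

Lemma XYpacking_is_packing : is_packing 4 XYpacking.
Proof.
apply/packingP; split; last exact: XYpacking_pair_le1.
by move=> B /mem_XYpacking[][i ->]; rewrite ?card_Xblock ?card_Yblock.
Qed.

Lemma XYpacking_max_ppc : max_ppc_size XYpacking 2.
Proof.
have m_gt0 : 0 < m by lia.
pose i0 := Ordinal m_gt0; pose j3 := Ordinal m_gt3.
have X0Y3 : Xblock i0 != Yblock j3.
  by apply/eqP => XY; have := Xblock_inord0 i0; rewrite XY (negbTE (Yblock_notin_inord0 j3)).
apply: (max_ppc2_of_cover (Xblock_in i0) (Yblock_in j3) X0Y3 _ (a := inord 0) (b := inord 1)).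
  by rewrite -setI_eq0; apply/eqP/setP => p; rewrite !inE /=; apply/negbTE; lia.
by move=> B /mem_XYpacking[][i ->]; rewrite ?Xblock_inord0 ?Yblock_inord1 ?orbT.
Qed.

Lemma beta_ge_XYpacking : 2 * m <= beta 2 v 4.
Proof.
by rewrite -card_XYpacking; apply: leq_card_beta XYpacking_is_packing XYpacking_max_ppc.
Qed.

End Construction.

Lemma beta_2_4_le (v : nat) : 81 <= v -> beta 2 v 4 <= (2 * v - 3) %/ 3.
Proof.
move=> v_ge81; apply/bigmax_leqP => F /andP[/packingP[card_block pair_le1]].
case/andP=> _ /negP no_ppc3; rewrite -[X in (2 * X - 3) %/ 3](card_ord v).
apply: card_no_three_disjoint; rewrite ?card_ord // => B1 B2 B3 B1F B2F B3F.
move=> d12 d13 d23; apply: no_ppc3; apply: ppc3_of_disjoint d12 d13 d23 => //.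
by apply/negP => /card_block; rewrite cards0.
Qed.

Theorem theorem4p2 (v : nat) (hv : 81 <= v) :
  beta 2 v 4 <= (2 * v - 3) %/ 3 /\
  (v %% 3 = 0 -> (2 * v - 6) %/ 3 <= beta 2 v 4) /\
  (v %% 3 = 1 -> (2 * v - 8) %/ 3 <= beta 2 v 4) /\
  (v %% 3 = 2 -> (2 * v - 4) %/ 3 <= beta 2 v 4).
Proof.
split; first exact: beta_2_4_le.
case: v hv => [//|n] hv.
have m_gt3 : 3 < (n.+1 - 2) %/ 3 by lia.
have m_fits : 3 * ((n.+1 - 2) %/ 3) + 2 <= n.+1 by lia.
have lower := beta_ge_XYpacking m_gt3 m_fits.
by split; [|split] => v_mod3; apply: leq_trans lower; lia.
Qed.
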